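(* Let $L$ be a finite lattice, $a\in L$, and $\varphi\in M_1(L)$. Then the function $x\mapsto\lambda(\varphi;a,x)$ belongs to $M_1(L)$.
   Context: $L$ is a finite lattice with join $\vee$ and meet $\wedge$. $M_1(L)$ is the set of nonnegative monotone (order-preserving) real functions on $L$. A path from $a$ to $b$ in $L$ is a sequence $H=(h_0,h_1,\dots,h_m)$ of distinct elements of $L$ with $h_0=a$, $h_m=b$ ($m\ge0$), viewed as a tree with edges $\{h_{i-1},h_i\}$; for it $\varphi(H)=\sum_{i=0}^m\varphi(h_i)-\sum_{i=1}^m\varphi(h_{i-1}\vee h_i)$. Define $\lambda(\varphi;a,b)=\max\{\varphi(H): H\text{ a path from }a\text{ to }b\}$. *)

From mathcomp Require Import all_boot all_order all_algebra.
Set Implicit Arguments. Unset Strict Implicit. Unset Printing Implicit Defensive.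
Import Order.TTheory GRing.Theory Num.Theory.
Local Open Scope order_scope.
Local Open Scope ring_scope.

Section Lam.
Variables (d : Order.disp_t) (L : finLatticeType d) (R : realFieldType).

Definition M1 (phi : L -> R) : Prop :=
  (forall x, 0 <= phi x) /\ (forall x y : L, (x <= y)%O -> phi x <= phi y).

Definition is_path (a b : L) (H : seq L) : bool :=
  [&& H != [::], head a H == a, last a H == b & uniq H].

Definition path_val (phi : L -> R) (H : seq L) : R :=
  \sum_(h <- H) phi h
  - \sum_(e <- zip H (behead H)) phi (e.1 `|` e.2)%O.

(* all candidate sequences of length 1..#|L| (every path of distinct
   elements has at most #|L| vertices) *)
Definition all_seqs : seq (seq L) :=
  flatten [seq [seq val t | t : n.-tuple L] | n <- iota 1 #|L|].

Definition paths (a b : L) : seq (seq L) := [seq H <- all_seqs | is_path a b H].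

(* the trivial path [a] or [a; b] is a path, used as the base value *)
Definition base_path (a b : L) : seq L := if a == b then [:: a] else [:: a; b].

Definition lambda (phi : L -> R) (a b : L) : R :=
  \big[Num.max/path_val phi (base_path a b)]_(H <- paths a b) path_val phi H.

End Lam.

(* A path from a to x can be continued to any y >= x without losing value:
   if y lies on the path, cut the path at y, which for monotone phi only
   drops a nonpositive tail; otherwise append y, which costs
   phi y - phi (x `|` y) = 0.  Hence lambda(phi; a, .) is monotone, and it is
   nonnegative because lambda(phi; a, a `&` x) >= phi (a `&` x) >= 0. *)
From mathcomp Require Import all_boot all_order all_algebra.
From mathcomp Require Import lra.
Import Order.TTheory GRing.Theory Num.Theory.

Set Implicit Arguments.
Unset Strict Implicit.
Unset Printing Implicit Defensive.

Local Open Scope order_scope.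
Local Open Scope ring_scope.

Section Paths.
Variables (d : Order.disp_t) (L : finLatticeType d) (R : realFieldType).
Variable phi : L -> R.

Lemma path_val_seq1 (x : L) : path_val phi [:: x] = phi x.
Proof. by rewrite /path_val /= big_seq1 big_nil subr0. Qed.

Lemma path_val_cons2 (x y : L) s :
  path_val phi [:: x, y & s] = phi x - phi (x `|` y) + path_val phi (y :: s).
Proof. by rewrite /path_val /= !big_cons opprD addrACA addrA. Qed.

Lemma path_val_cat (s : seq L) z t : s != [::] ->
  path_val phi (s ++ z :: t) =
  path_val phi s - phi (last z s `|` z) + path_val phi (z :: t).
Proof.
case: s => [//|x s] _; elim: s x => [|y s IH] x /=.
  by rewrite path_val_cons2 path_val_seq1.
by rewrite path_val_cons2 IH path_val_cons2 !addrA.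
Qed.

Lemma mem_paths (a b : L) H : is_path a b H -> H \in paths a b.
Proof.
move=> pathH; rewrite mem_filter pathH /=.
case/and4P: pathH => H_neq0 _ _ uniqH.
apply/flattenP; exists [seq val t | t : (size H).-tuple L].
  apply/mapP; exists (size H) => //; rewrite mem_iota add1n ltnS.
  by rewrite -(card_uniqP uniqH) max_card andbT (card_uniqP uniqH) lt0n size_eq0.
by apply/imageP; exists (in_tuple H).
Qed.

Lemma is_path_base (a b : L) : is_path a b (base_path a b).
Proof.
rewrite /base_path /is_path.
by case: (eqVneq a b) => [->|neq_ab] /=; rewrite !eqxx ?inE ?neq_ab.
Qed.

Lemma path_val_le_lambda (a b : L) H :
  is_path a b H -> path_val phi H <= lambda phi a b.
Proof. by move=> pathH; rewrite (le_bigmax_seq _ _ _ _ (mem_paths pathH)). Qed.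

Lemma lambda_le (a b : L) (z : R) :
  (forall H, is_path a b H -> path_val phi H <= z) -> lambda phi a b <= z.
Proof.
move=> ub; rewrite /lambda big_seq; apply: bigmax_le; first exact/ub/is_path_base.
by move=> H; rewrite mem_filter => /andP[/ub].
Qed.

Lemma lambda_ge_below (a b : L) : (b <= a)%O -> phi b <= lambda phi a b.
Proof.
move=> le_ba; apply: le_trans (path_val_le_lambda (is_path_base a b)).
rewrite /base_path; case: (eqVneq a b) => [->|_]; first by rewrite path_val_seq1.
by rewrite path_val_cons2 path_val_seq1 (join_l le_ba) subrr add0r.
Qed.

Lemma is_path_rcons (a x y : L) H : is_path a x H -> y \notin H ->
  is_path a y (rcons H y).
Proof.
case/and4P=> H_neq0 /eqP headH _ uniqH yNH; apply/and4P; split.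
- by rewrite -size_eq0 size_rcons.
- by case: H H_neq0 headH {uniqH yNH} => [|h H] //= _ ->.
- by rewrite last_rcons.
- by rewrite rcons_uniq yNH.
Qed.

Lemma is_path_prefix (a x y : L) p q : is_path a x (p ++ y :: q) ->
  is_path a y (rcons p y).
Proof.
case/and4P=> _ /eqP headH _; rewrite -cat_rcons cat_uniq => /andP[uniq_py _].
apply/and4P; split.
- by rewrite -size_eq0 size_rcons.
- by case: p headH {uniq_py} => [|h p] //= ->.
- by rewrite last_rcons.
- exact: uniq_py.
Qed.

End Paths.

Section MonotonePhi.
Variables (d : Order.disp_t) (L : finLatticeType d) (R : realFieldType).
Variable phi : L -> R.
Hypothesis phi_homo : forall x y : L, (x <= y)%O -> phi x <= phi y.

Lemma path_val_le_head (z : L) t : path_val phi (z :: t) <= phi z.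
Proof.
elim: t z => [|w t IH] z; first by rewrite path_val_seq1.
have := phi_homo (leUr w z); rewrite path_val_cons2; have := IH w; lra.
Qed.

Lemma path_extend (a x y : L) H : is_path a x H -> (x <= y)%O ->
  exists2 H', is_path a y H' & path_val phi H <= path_val phi H'.
Proof.
move=> pathH le_xy; have [yH | yNH] := boolP (y \in H); last first.
  exists (rcons H y); first exact: is_path_rcons pathH yNH.
  case/and4P: pathH => H_neq0 _ /eqP lastH _.
  rewrite -cats1 path_val_cat // path_val_seq1.
  case: H H_neq0 lastH {yNH} => [//|h H] _ lastH.
  have -> : last y (h :: H) = x := lastH.
  by rewrite (join_r le_xy) subrK.
case/splitPr: yH pathH => p q pathH; exists (rcons p y).
  exact: is_path_prefix pathH.
case: q pathH => [|z q] _; first by rewrite cats1.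
rewrite -cat_rcons path_val_cat ?last_rcons -?size_eq0 ?size_rcons //.
have := path_val_le_head z q; have := phi_homo (leUr z y); lra.
Qed.

Lemma lambda_homo (a x y : L) : (x <= y)%O -> lambda phi a x <= lambda phi a y.
Proof.
move=> le_xy; apply: lambda_le => H pathH.
have [H' pathH' le_HH'] := path_extend pathH le_xy.
exact: le_trans le_HH' (path_val_le_lambda phi pathH').
Qed.

End MonotonePhi.

Theorem lemma3p10 (d : Order.disp_t) (L : finLatticeType d) (R : realFieldType)
  (a : L) (phi : L -> R) :
  M1 phi -> M1 (fun x => lambda phi a x).
Proof.
case=> phi_ge0 phi_homo; split; last by move=> x y; apply: lambda_homo.
move=> x; apply: le_trans (phi_ge0 (a `&` x)) _.
apply: le_trans (lambda_ge_below phi (leIl a x)) _.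
exact/lambda_homo/leIr.
Qed.
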